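(* Let $\|\cdot\|$ be a norm on $\mathbb{M}_n$ and let $\|\cdot\|_*$ be its dual norm. The closed unit ball of $\|\cdot\|_*$ is $C^*$-convex if and only if $\|\cdot\|$ is an $L$-norm.
   Context: $\mathbb{M}_n$ is the algebra of complex $n\times n$ matrices with identity $I$. The dual norm is $\|Y\|_*=\sup\{|\mathrm{Tr}(Y^*X)| : X\in\mathbb{M}_n,\ \|X\|\le 1\}$. A subset $\mathscr{K}\subseteq\mathbb{M}_n$ is $C^*$-convex if whenever $A_1,\dots,A_k\in\mathscr{K}$ and $C_1,\dots,C_k\in\mathbb{M}_n$ satisfy $\sum_{i=1}^k C_i^*C_i=I$, then $\sum_{i=1}^k C_i^*A_iC_i\in\mathscr{K}$. A norm $\|\cdot\|$ is an $L$-norm if $\sum_{i=1}^k\|C_iXC_i^*\|\le\|X\|$ for all $k$, all $X$ and all $C_1,\dots,C_k$ with $\sum_{i=1}^k C_i^*C_i=I$. *)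

From HB Require Import structures.
From mathcomp Require Import all_boot all_order all_algebra.
From mathcomp Require Import complex.
From mathcomp Require Import boolp classical_sets reals.
Set Implicit Arguments. Unset Strict Implicit. Unset Printing Implicit Defensive.
Import Order.TTheory GRing.Theory Num.Theory.
Local Open Scope ring_scope.
Local Open Scope classical_set_scope.

Section Defs.
Variables (R : realType) (n : nat).
Local Notation C := (R[i]).
Local Notation M := 'M[C]_n.

Definition cabs (z : C) : R := ComplexField.Normc.normc z.

Definition adjmx (A : M) : M := (map_mx (@conjc R) A)^T.

Definition is_norm (N : M -> R) : Prop :=
  [/\ (forall X, 0 <= N X),
      (forall X, N X = 0 -> X = 0),
      (forall (c : C) X, N (c *: X) = cabs c * N X) &
      (forall X Y, N (X + Y) <= N X + N Y)].

Definition dual_norm (N : M -> R) (Y : M) : R :=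
  sup [set cabs (\tr (adjmx Y *m X)) | X in [set X : M | N X <= 1]].

Definition Cstar_convex (K : set M) : Prop :=
  forall (k : nat) (A Cs : 'I_k -> M),
    (forall i, K (A i)) ->
    \sum_(i < k) adjmx (Cs i) *m Cs i = 1%:M ->
    K (\sum_(i < k) adjmx (Cs i) *m A i *m Cs i).

Definition is_Lnorm (N : M -> R) : Prop :=
  forall (k : nat) (X : M) (Cs : 'I_k -> M),
    \sum_(i < k) adjmx (Cs i) *m Cs i = 1%:M ->
    \sum_(i < k) N (Cs i *m X *m adjmx (Cs i)) <= N X.

End Defs.

From HB Require Import structures.
From mathcomp Require Import all_boot all_order all_algebra.
From mathcomp Require Import complex.
From mathcomp Require Import boolp classical_sets reals topology normedtype derive.
From mathcomp Require Import lra ring.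
Import numFieldNormedType.Exports.
Import Order.TTheory GRing.Theory Num.Theory.
Set Implicit Arguments. Unset Strict Implicit. Unset Printing Implicit Defensive.
Local Open Scope ring_scope.
Local Open Scope classical_set_scope.
Local Open Scope complex_scope.

(* Let B be the closed unit ball of the dual norm and D_i = C_i X C_i^*.
   In finite dimension the norm dominates the matrix entries, so the supremum
   defining the dual norm is finite and Y is in B iff |Tr(Y^* X)| <= ||X|| for
   every X. Since Tr(Z^* X) = sum_i Tr(A_i^* D_i) for Z = sum_i C_i^* A_i C_i,
   the L-norm inequality directly gives the C*-convexity of B. Conversely,
   Hahn-Banach, applied to the norm seen as a function of the real coordinates
   of M_n, gives some Y_i in B with Tr(Y_i^* D_i) = ||D_i||; C*-convexity puts
   sum_i C_i^* Y_i C_i in B, and testing it against X yields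
   sum_i ||D_i|| <= ||X||. *)

Section ComplexModulus.
Variable R : realType.
Local Notation C := R[i].
Implicit Types (z w : C) (t : R).

Lemma cabs_normc z : `|z| = (cabs z)%:C.
Proof. by case: z. Qed.

Lemma cabs_sqr z : cabs z ^+ 2 = complex.Re z ^+ 2 + complex.Im z ^+ 2.
Proof. by case: z => a b; rewrite /cabs /= sqr_sqrtr // addr_ge0 // sqr_ge0. Qed.

Lemma cabs_ge0 z : 0 <= cabs z.
Proof. by case: z => a b; rewrite /cabs /= sqrtr_ge0. Qed.

Lemma cabs_real t : cabs t%:C = `|t|.
Proof. by rewrite /cabs /= expr0n /= addr0 sqrtr_sqr. Qed.

Lemma cabs0 : cabs (0 : C) = 0.
Proof. by rewrite (cabs_real 0) normr0. Qed.

Lemma cabsM z w : cabs (z * w) = cabs z * cabs w.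
Proof. exact: ComplexField.Normc.normcM. Qed.

Lemma cabs_conj z : cabs z^* = cabs z.
Proof. by case: z => a b; rewrite /cabs /= sqrrN. Qed.

Lemma cabs_sum (I : Type) (s : seq I) (P : pred I) (F : I -> C) :
  cabs (\sum_(i <- s | P i) F i) <= \sum_(i <- s | P i) cabs (F i).
Proof.
apply: (big_ind2 (fun x y => cabs x <= y)); first by rewrite cabs0.
  move=> x1 x2 y1 y2 le1 le2; apply: le_trans (lerD le1 le2).
  by rewrite -lecR -!cabs_normc rmorphD /= ler_normD.
by [].
Qed.

Lemma Re_le_cabs z : complex.Re z <= cabs z.
Proof.
apply: le_trans (ler_norm _) _; rewrite -sqrtr_sqr.
by case: z => a b; rewrite ler_wsqrtr //= lerDl sqr_ge0.
Qed.

Lemma cabs_le_Re_Im z : cabs z <= `|complex.Re z| + `|complex.Im z|.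
Proof.
rewrite -ler_sqr ?nnegrE ?cabs_ge0 ?addr_ge0 // cabs_sqr sqrrD.
by rewrite !real_normK ?num_real // lerD2r lerDl mulrn_wge0 // mulr_ge0.
Qed.

Lemma conjc_mulc z : z^* * z = (cabs z ^+ 2)%:C.
Proof.
case: z => a b; apply/eqP; rewrite cabs_sqr eq_complex /=.
by apply/andP; split; apply/eqP; ring.
Qed.

Lemma Re_eq_cabs z : cabs z <= complex.Re z -> z = (complex.Re z)%:C.
Proof.
move=> le_cabs_Re; have := cabs_sqr z; have := Re_le_cabs z.
have := cabs_ge0 z; case: z le_cabs_Re => a b /= *.
have /eqP : b ^+ 2 = 0 by nra.
by rewrite sqrf_eq0 => /eqP ->.
Qed.

End ComplexModulus.

Lemma mx_norm_entry_le (K : realDomainType) (m n : nat) (A : 'M[K]_(m, n)) i j :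
  `|A i j| <= `|A|.
Proof. by rewrite [leRHS]mx_normrE; apply/bigmax_geP; right; exists (i, j). Qed.

Section NormOnRV.
Variables (R : realType) (k : nat) (p : 'rV[R]_k -> R).
Hypothesis pD : forall u v, p (u + v) <= p u + p v.
Hypothesis pZ : forall (r : R) u, p (r *: u) = `|r| * p u.
Hypothesis p_eq0 : forall u, p u = 0 -> u = 0.

Lemma rVnorm0 : p 0 = 0.
Proof. by rewrite -(scale0r 0) pZ normr0 mul0r. Qed.

Lemma rVnormN u : p (- u) = p u.
Proof. by rewrite -scaleN1r pZ normrN normr1 mul1r. Qed.

Lemma rVnorm_ge0 u : 0 <= p u.
Proof. by have := pD u (- u); rewrite subrr rVnorm0 rVnormN; lra. Qed.

Lemma rVnorm_lipschitz u v : `|p u - p v| <= p (u - v).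
Proof.
have le_u := pD (u - v) v; have le_v := pD (v - u) u.
rewrite subrK in le_u; rewrite subrK -opprB rVnormN in le_v.
by rewrite ler_norml; apply/andP; split; lra.
Qed.

Let K := \sum_(i < k) p (delta_mx 0 i).

Lemma rVnorm_le_mx_norm u : p u <= K * `|u|.
Proof.
rewrite [in leLHS](row_sum_delta u) mulr_suml.
apply: le_trans (_ : _ <= \sum_i p (u 0 i *: delta_mx 0 i)) _.
  elim/big_ind2: _ => [|v1 r1 v2 r2 le1 le2|//]; first by rewrite rVnorm0.
  exact: le_trans (pD _ _) (lerD le1 le2).
by apply: ler_sum => i _; rewrite pZ mulrC ler_wpM2l ?rVnorm_ge0 ?mx_norm_entry_le.
Qed.

Lemma rVnorm_continuous : continuous p.
Proof.
have K_ge0 : 0 <= K by apply: sumr_ge0 => i _; apply: rVnorm_ge0.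
move=> u; apply/(@cvgrPdist_lt _ _ _ (nbhs u) (nbhs_filter u)) => e e_gt0.
apply/(@nbhs_normP _ _ u); exists (e / (K + 1)) => /=.
  by rewrite divr_gt0 // ltr_wpDl.
move=> v /=; rewrite ltr_pdivlMr ?ltr_wpDl // => lt_uv.
apply: le_lt_trans (rVnorm_lipschitz u v) _.
apply: le_lt_trans (rVnorm_le_mx_norm _) _; apply: le_lt_trans lt_uv.
by rewrite mulrC ler_wpM2l ?normr_ge0 // lerDl.
Qed.

Lemma mx_norm_le_rVnorm : exists2 m : R, 0 < m & forall u, m * `|u| <= p u.
Proof.
pose S := [set u : 'rV[R]_k | `|u| = 1].
have normalize u : u != 0 -> S (`|u|^-1 *: u).
  move=> u_neq0; rewrite /S /= normrZ ger0_norm ?invr_ge0 ?normr_ge0 //.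
  by rewrite mulVf // normr_eq0.
have [[u0 Su0]|S0] := pselect (S !=set0); last first.
  exists 1 => // u; rewrite mul1r.
  have [->|u_neq0] := eqVneq u 0; first by rewrite normr0 rVnorm_ge0.
  by exfalso; apply: S0; exists (`|u|^-1 *: u); apply: normalize.
have S_compact : compact S.
  apply: bounded_closed_compact.
    exists 1; split; first by rewrite num_real.
    by move=> r r_gt1 v /= ->; apply: ltW.
  rewrite (_ : S = (fun v => `|v|) @^-1` [set 1]) //.
  apply: preimage_closed; last exact: closed_eq.
  by move=> v _; apply: norm_continuous.
have [c /set_mem Sc c_min] := EVT_min_rV (ex_intro _ u0 Su0) S_compact
  (continuous_subspaceT rVnorm_continuous).
have pc_gt0 : 0 < p c.
  rewrite lt0r rVnorm_ge0 andbT; apply/eqP => /p_eq0 c0.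
  by move: Sc; rewrite /S /= c0 normr0 => /eqP; rewrite eq_sym oner_eq0.
exists (p c) => // u; have [->|u_neq0] := eqVneq u 0.
  by rewrite normr0 mulr0 rVnorm_ge0.
have := c_min _ (mem_set (normalize u u_neq0)).
rewrite pZ ger0_norm ?invr_ge0 ?normr_ge0 // ler_pdivlMl ?normr_gt0 //.
by rewrite mulrC.
Qed.

End NormOnRV.

Section HahnBanach.
Variables (R : realType) (V : lmodType R) (p : V -> R).
Hypothesis pD : forall u v, p (u + v) <= p u + p v.
Hypothesis pZ : forall (r : R) u, 0 <= r -> p (r *: u) = r * p u.

Lemma sublinear0 : p 0 = 0.
Proof. by rewrite -(scale0r 0) pZ // mul0r. Qed.

Lemma sublinearN u : - p u <= p (- u).
Proof. by have := pD u (- u); rewrite subrr sublinear0; lra. Qed.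

Lemma sublinear_scale_inv (s : R) u w : 0 < s ->
  p (s^-1 *: u + w) = s^-1 * p (u + s *: w).
Proof.
move=> s_gt0; rewrite -pZ ?invr_ge0 ?ltW // scalerDr scalerA mulVf ?gt_eqF //.
by rewrite scale1r.
Qed.

Lemma sublinear_extension_step (G : set (V * R)) (z : V) :
  G (0, 0) ->
  (forall g h, G g -> G h -> G (g.1 + h.1, g.2 + h.2)) ->
  (forall s g, 0 < s -> G g -> G (s *: g.1, s * g.2)) ->
  (forall g, G g -> g.2 <= p g.1) ->
  exists c, forall g t, G g -> g.2 + t * c <= p (g.1 + t *: z).
Proof.
move=> G0 GD GZ Gp.
have sep g h : G g -> G h -> g.2 - p (g.1 - z) <= p (h.1 + z) - h.2.
  move=> Gg Gh; have := Gp _ (GD _ _ Gg Gh) => /=.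
  have := pD (g.1 - z) (h.1 + z); rewrite addrACA addNr addr0; lra.
(* By [sep], any c between sup_g (g.2 - p (g.1 - z)) and
   inf_h (p (h.1 + z) - h.2) extends the functional. *)
pose E := [set g.2 - p (g.1 - z) | g in G].
have E_ub : has_ubound E.
  by exists (p (0 + z) - 0) => _ [g Gg <-]; exact: sep _ (0, 0) Gg G0.
have E0 : E !=set0 by exists (0 - p (0 - z)), (0, 0).
exists (sup E) => g t Gg.
have [t_lt0|t_gt0|->] := ltrgtP t 0; last by rewrite mul0r scale0r !addr0 Gp.
- have nt_gt0 : 0 < - t by rewrite oppr_gt0.
  have Gg' : G ((- t)^-1 *: g.1, (- t)^-1 * g.2) by apply: GZ; rewrite ?invr_gt0.
  have := ub_le_sup E_ub (ex_intro2 _ _ _ Gg' erefl).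
  rewrite /= sublinear_scale_inv // scalerN scaleNr opprK.
  by rewrite -mulrBr ler_pdivrMl // mulNr; lra.
- have Gg' : G (t^-1 *: g.1, t^-1 * g.2) by apply: GZ; rewrite ?invr_gt0.
  have : sup E <= p (t^-1 *: g.1 + z) - t^-1 * g.2.
    by apply: ge_sup E0 _ => _ [h Gh <-]; exact: sep _ _ Gh Gg'.
  by rewrite sublinear_scale_inv // -mulrBr ler_pdivlMl //; lra.
Qed.

Variables (T : eqType) (b : T -> V).

(* Domination is required for every representation of a vector of the span,
   so [b] need not be free: it forces the functional to be well defined. *)
Definition dominated_on (s : seq T) (a : T -> R) :=
  forall lam : T -> R, \sum_(i <- s) lam i * a i <= p (\sum_(i <- s) lam i *: b i).

Lemma dominated_on_cons s a x : x \notin s -> dominated_on s a ->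
  exists c, dominated_on (x :: s) (fun i => if i == x then c else a i).
Proof.
move=> x_notin_s dom_a.
pose G := [set (\sum_(i <- s) lam i *: b i, \sum_(i <- s) lam i * a i)
           | lam in @setT (T -> R)].
have [|_ _ [lam _ <-] [lam' _ <-]|r _ _ [lam _ <-]|_ [lam _ <-]|c dom_c] :=
  @sublinear_extension_step G (b x).
- by exists (fun=> 0) => //; rewrite !big1 // => i _; rewrite (scale0r, mul0r).
- exists (fun i => lam i + lam' i) => //.
  rewrite /= -!big_split; congr (_, _);
    by apply: eq_bigr => i _; rewrite (scalerDl, mulrDl).
- exists (fun i => r * lam i) => //; rewrite scaler_sumr mulr_sumr.
  by congr (_, _); apply: eq_bigr => i _; rewrite (scalerA, mulrA).
- exact: dom_a.
exists c => lam; rewrite !big_cons eqxx.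
have -> : \sum_(i <- s) lam i * (if i == x then c else a i) =
          \sum_(i <- s) lam i * a i.
  by apply: eq_big_seq => i i_in_s; case: eqP i_in_s x_notin_s => // -> ->.
rewrite addrC [_ *: b x + _]addrC.
by apply: (dom_c (_, _) (lam x)); exists lam.
Qed.

Lemma dominated_on_catl (s s' : seq T) a : uniq (s' ++ s) -> dominated_on s a ->
  exists2 a', dominated_on (s' ++ s) a' & {in s, a' =1 a}.
Proof.
elim: s' => [|x s' IH] /=; first by move=> _ dom_a; exists a.
case/andP=> x_notin uniq_s' /(IH uniq_s') [a' dom_a' a'_eq].
have [c dom_c] := dominated_on_cons x_notin dom_a'.
exists (fun i => if i == x then c else a' i) => // i i_in_s.
have -> : (i == x) = false.
  by apply/eqP => eq_ix; rewrite -eq_ix mem_cat i_in_s orbT in x_notin.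
exact: a'_eq.
Qed.

End HahnBanach.

Lemma sublinear_supporting_functional (R : realType) (k : nat)
    (p : 'rV[R]_k -> R) (v0 : 'rV[R]_k) :
  (forall u v, p (u + v) <= p u + p v) ->
  (forall (r : R) u, 0 <= r -> p (r *: u) = r * p u) ->
  exists2 a : 'rV[R]_k,
    (forall v : 'rV[R]_k, \sum_i a 0 i * v 0 i <= p v) &
    \sum_i a 0 i * v0 0 i = p v0.
Proof.
move=> pD pZ.
(* Start from t v0 |-> t p v0 and add the unit vectors one at a time. *)
pose b o : 'rV[R]_k := if o is Some i then delta_mx 0 i else v0.
pose s := [seq Some i | i <- enum 'I_k].
have sum_s (W : zmodType) (F : option 'I_k -> W) :
    \sum_(o <- s ++ [:: None]) F o = \sum_i F (Some i) + F None.
  by rewrite big_cat big_map big_enum big_seq1.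
have dom0 : dominated_on p b [:: None] (fun=> p v0).
  move=> lam; rewrite !big_seq1 /=.
  have [t_ge0|t_lt0] := leP 0 (lam None); first by rewrite pZ.
  have nt_ge0 : 0 <= - lam None by rewrite oppr_ge0; apply: ltW.
  rewrite -[lam None *: v0]opprK -scalerN -scaleNr pZ // mulNr -mulrN.
  apply: (ler_wnM2l (ltW t_lt0)).
  by have := sublinearN pD pZ (- v0); rewrite opprK.
have uniq_s : uniq (s ++ [:: None]).
  rewrite cat_uniq map_inj_uniq ?enum_uniq //=; last exact: Some_inj.
  by rewrite orbF andbT; apply/mapP => -[].
have [a dom_a a_None] := dominated_on_catl pD pZ uniq_s dom0.
have dot_a (v : 'rV[R]_k) :
    \sum_i (\row_i a (Some i)) 0 i * v 0 i = \sum_i v 0 i * a (Some i).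
  by apply: eq_bigr => i _; rewrite mxE mulrC.
have dom_v (v : 'rV[R]_k) : \sum_i v 0 i * a (Some i) <= p v.
  have := dom_a (fun o => if o is Some i then v 0 i else 0).
  by rewrite !sum_s /= mul0r scale0r !addr0 -row_sum_delta.
exists (\row_i a (Some i)) => [v|]; rewrite dot_a //.
apply/le_anti; rewrite dom_v /=.
have := dom_a (fun o => if o is Some i then - v0 0 i else 1).
rewrite !sum_s /= mul1r scale1r a_None ?mem_head //.
rewrite (eq_bigr (fun i => - (v0 0 i *: delta_mx 0 i))) => [|i _]; last exact: scaleNr.
rewrite (eq_bigr (fun i => - (v0 0 i * a (Some i)))) => [|i _]; last exact: mulNr.
by rewrite !sumrN -row_sum_delta addNr sublinear0 //; lra.
Qed.

Section Adjoint.
Variables (R : realType) (n : nat).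
Local Notation M := 'M[R[i]]_n.

Lemma adjmxM (A B : M) : adjmx (A *m B) = adjmx B *m adjmx A.
Proof. by rewrite /adjmx map_mxM trmx_mul. Qed.

Lemma adjmxK : involutive (@adjmx R n).
Proof. by move=> A; apply/matrixP => i j; rewrite !mxE conjcK. Qed.

Lemma adjmx_sum (I : Type) (s : seq I) (F : I -> M) :
  adjmx (\sum_(i <- s) F i) = \sum_(i <- s) adjmx (F i).
Proof.
apply/matrixP => i j; rewrite /adjmx !mxE summxE rmorph_sum summxE.
by apply: eq_bigr => x _; rewrite !mxE.
Qed.

Lemma mxtrace_adjmx_Cstar_comb (k : nat) (A Cs : 'I_k -> M) (X : M) :
  \tr (adjmx (\sum_(i < k) adjmx (Cs i) *m A i *m Cs i) *m X) =
  \sum_(i < k) \tr (adjmx (A i) *m (Cs i *m X *m adjmx (Cs i))).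
Proof.
rewrite adjmx_sum mulmx_suml raddf_sum; apply: eq_bigr => i _.
by rewrite !adjmxM adjmxK !mulmxA mxtrace_mulC !mulmxA.
Qed.

End Adjoint.

Section RealCoordinates.
Variables (R : realType) (n : nat).
Local Notation C := R[i].
Local Notation M := 'M[C]_n.
Local Notation T := ('I_n * 'I_n * bool)%type.
Local Notation k := #|{: T}|.

Definition rcoord (X : M) (t : T) : R :=
  let: (j, l, b) := t in if b then complex.Im (X j l) else complex.Re (X j l).

Definition mxcoord (X : M) : 'rV[R]_k := \row_i rcoord X (enum_val i).

Definition coordmx (v : 'rV[R]_k) : M :=
  \matrix_(j, l) ((v 0 (enum_rank (j, l, false)))%:C
                  + 'i * (v 0 (enum_rank (j, l, true)))%:C).

Lemma mxcoordK : cancel mxcoord coordmx.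
Proof.
by move=> X; apply/matrixP => j l; rewrite !mxE !enum_rankK [RHS]complexE.
Qed.

Lemma coordmxK : cancel coordmx mxcoord.
Proof.
move=> v; apply/rowP => i; rewrite !mxE; case: (enum_val i) (enum_valK i).
by case=> j l [] <-; rewrite /= mxE /=; ring.
Qed.

Lemma coordmx0 : coordmx 0 = 0.
Proof. by apply/matrixP => j l; rewrite !mxE rmorph0 mulr0 addr0. Qed.

Lemma coordmxD (u v : 'rV[R]_k) : coordmx (u + v) = coordmx u + coordmx v.
Proof. by apply/matrixP => j l; rewrite !mxE !rmorphD /=; ring. Qed.

Lemma coordmxZ (r : R) (v : 'rV[R]_k) : coordmx (r *: v) = r%:C *: coordmx v.
Proof. by apply/matrixP => j l; rewrite !mxE !rmorphM /=; ring. Qed.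

Lemma sum_coord_index (V : zmodType) (F : T -> V) :
  \sum_(i < k) F (enum_val i) = \sum_j \sum_l (F (j, l, true) + F (j, l, false)).
Proof.
rewrite -(big_enum_val F) /= (eq_bigl xpredT) => [|t]; last by rewrite inE.
rewrite (eq_bigr (fun t => F (t.1, t.2))); last by case.
rewrite -(pair_bigA _ (fun p b => F (p, b))) /=.
under eq_bigr do rewrite big_bool.
rewrite (pair_bigA _ (fun j l => F (j, l, true) + F (j, l, false))).
by apply: eq_bigr; case.
Qed.

Lemma Re_mxtrace_adjmx (Y X : M) :
  complex.Re (\tr (adjmx Y *m X)) = \sum_(i < k) mxcoord Y 0 i * mxcoord X 0 i.
Proof.
under eq_bigr do rewrite !mxE.
rewrite (sum_coord_index (fun t => rcoord Y t * rcoord X t)) exchange_big /=.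
rewrite (raddf_sum (@complex.Re R : Rcomplex R -> R)).
apply: eq_bigr => l _; rewrite !mxE.
rewrite (raddf_sum (@complex.Re R : Rcomplex R -> R)).
apply: eq_bigr => j _; rewrite !mxE.
by case: (Y j l) (X j l) => [a b] [c d] /=; ring.
Qed.

Lemma cabs_entry_le_mxcoord (X : M) j l : cabs (X j l) <= 2 * `|mxcoord X|.
Proof.
have le_coord t : `|rcoord X t| <= `|mxcoord X|.
  by have := mx_norm_entry_le (mxcoord X) 0 (enum_rank t); rewrite mxE enum_rankK.
rewrite mulr2n mulrDl mul1r; apply: le_trans (cabs_le_Re_Im _) _.
exact: lerD (le_coord (j, l, false)) (le_coord (j, l, true)).
Qed.

End RealCoordinates.

Arguments coordmx {R n} v.

Section NormedMatrices.
Variables (R : realType) (n : nat) (N : 'M[R[i]]_n -> R).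
Hypothesis normN : is_norm N.
Local Notation C := R[i].
Local Notation M := 'M[C]_n.
Implicit Types X Y : M.

Lemma norm_ge0 X : 0 <= N X. Proof. by case: normN. Qed.

Lemma norm_eq0 X : N X = 0 -> X = 0.
Proof. by case: normN => _ eq0 _ _; apply: eq0. Qed.

Lemma normZ (c : C) X : N (c *: X) = cabs c * N X. Proof. by case: normN. Qed.

Lemma normD X Y : N (X + Y) <= N X + N Y. Proof. by case: normN. Qed.

Lemma norm0 : N 0 = 0. Proof. by rewrite -(scale0r (0 : M)) normZ cabs0 mul0r. Qed.

Lemma mx_norm_mxcoord_le_norm : exists2 m : R, 0 < m &
  forall X, m * `|mxcoord X| <= N X.
Proof.
have [|||m m_gt0 le_m] := @mx_norm_le_rVnorm _ _ (N \o coordmx).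
- by move=> u v /=; rewrite coordmxD normD.
- by move=> r u /=; rewrite coordmxZ normZ cabs_real.
- by move=> u /= /norm_eq0; rewrite -coordmx0 => /(can_inj (@coordmxK _ _)).
by exists m => // X; rewrite -[in N X](mxcoordK X); apply: le_m.
Qed.

Lemma dual_set_has_ubound Y :
  has_ubound [set cabs (\tr (adjmx Y *m X)) | X in [set X | N X <= 1]].
Proof.
have [m m_gt0 le_m] := mx_norm_mxcoord_le_norm.
exists (\sum_l \sum_j cabs (Y j l) * (2 / m)) => _ [X NX_le1 <-].
apply: le_trans (cabs_sum _ _ _) _; apply: ler_sum => l _; rewrite mxE.
apply: le_trans (cabs_sum _ _ _) _; apply: ler_sum => j _.
rewrite !mxE cabsM cabs_conj ler_wpM2l ?cabs_ge0 //.
apply: le_trans (cabs_entry_le_mxcoord _ _ _) _.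
rewrite ler_pM2l // -[m^-1]mulr1 ler_pdivlMl //.
exact: le_trans (le_m X) NX_le1.
Qed.

Lemma dual_norm_le1P Y :
  dual_norm N Y <= 1 <-> forall X, cabs (\tr (adjmx Y *m X)) <= N X.
Proof.
split=> [dualY X|le_N]; last first.
  apply: ge_sup; first by exists (cabs (\tr (adjmx Y *m 0))), 0; rewrite //= norm0.
  by move=> _ [X NX_le1 <-]; apply: le_trans (le_N X) NX_le1.
have [/norm_eq0 ->|NX_neq0] := eqVneq (N X) 0.
  by rewrite mulmx0 linear0 cabs0 norm0.
have NX_gt0 : 0 < N X by rewrite lt0r NX_neq0 norm_ge0.
pose X' := (N X)^-1%:C *: X.
have normalized : N X' <= 1.
  by rewrite normZ cabs_real ger0_norm ?invr_ge0 ?norm_ge0 // mulVf.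
have := ub_le_sup (dual_set_has_ubound Y) (ex_intro2 _ _ X' normalized erefl).
move/le_trans/(_ dualY); rewrite -scalemxAr mxtraceZ cabsM cabs_real.
by rewrite ger0_norm ?invr_ge0 ?norm_ge0 // ler_pdivrMl // mulr1.
Qed.

Lemma cabs_le_of_Re_le Y :
  (forall X, complex.Re (\tr (adjmx Y *m X)) <= N X) ->
  forall X, cabs (\tr (adjmx Y *m X)) <= N X.
Proof.
move=> Re_le X; set w := \tr (adjmx Y *m X).
have := Re_le (w^* *: X).
rewrite -scalemxAr mxtraceZ -/w conjc_mulc normZ cabs_conj /=.
have := cabs_ge0 w; have := norm_ge0 X; nra.
Qed.

Lemma exists_norming_dual X0 :
  exists2 Y, dual_norm N Y <= 1 & \tr (adjmx Y *m X0) = (N X0)%:C.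
Proof.
have [||a dom_a a_X0] :=
  @sublinear_supporting_functional _ _ (N \o coordmx) (mxcoord X0).
- by move=> u v /=; rewrite coordmxD normD.
- by move=> r u r_ge0 /=; rewrite coordmxZ normZ cabs_real ger0_norm.
have Re_tr X :
    complex.Re (\tr (adjmx (coordmx a) *m X)) = \sum_i a 0 i * mxcoord X 0 i.
  by rewrite Re_mxtrace_adjmx coordmxK.
have Re_le X : complex.Re (\tr (adjmx (coordmx a) *m X)) <= N X.
  by rewrite Re_tr -[in N X](mxcoordK X); apply: dom_a.
exists (coordmx a); first exact/dual_norm_le1P/cabs_le_of_Re_le.
have Re_X0 : complex.Re (\tr (adjmx (coordmx a) *m X0)) = N X0.
  by rewrite Re_tr a_X0 /= mxcoordK.
by rewrite [LHS]Re_eq_cabs Re_X0 // cabs_le_of_Re_le.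
Qed.

Lemma Lnorm_of_Cstar_convex_dual_ball :
  Cstar_convex [set Y | dual_norm N Y <= 1] -> is_Lnorm N.
Proof.
move=> convex k X Cs unital.
have /choice [Y /all_and2 [dualY normY]] : forall i : 'I_k, exists Y,
    dual_norm N Y <= 1 /\ \tr (adjmx Y *m (Cs i *m X *m adjmx (Cs i))) =
                          (N (Cs i *m X *m adjmx (Cs i)))%:C.
  by move=> i; have [Y] := exists_norming_dual (Cs i *m X *m adjmx (Cs i)); exists Y.
have := (dual_norm_le1P _).1 (convex k Y Cs dualY unital) X.
rewrite mxtrace_adjmx_Cstar_comb; under eq_bigr do rewrite normY.
by rewrite -rmorph_sum cabs_real ger0_norm // sumr_ge0 // => i _; apply: norm_ge0.
Qed.

Lemma Cstar_convex_dual_ball_of_Lnorm :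
  is_Lnorm N -> Cstar_convex [set Y | dual_norm N Y <= 1].
Proof.
move=> Lnorm k A Cs dualA unital; apply/dual_norm_le1P => X.
rewrite mxtrace_adjmx_Cstar_comb; apply: le_trans (cabs_sum _ _ _) _.
apply: le_trans (Lnorm k X Cs unital); apply: ler_sum => i _.
exact: (dual_norm_le1P _).1 (dualA i) _.
Qed.

End NormedMatrices.

Theorem theorem2p5 (R : realType) (n : nat) (N : 'M[R[i]]_n -> R) :
  is_norm N ->
  (Cstar_convex [set Y : 'M[R[i]]_n | dual_norm N Y <= 1] <-> is_Lnorm N).
Proof.
move=> normN; split.
- exact: Lnorm_of_Cstar_convex_dual_ball.
- exact: Cstar_convex_dual_ball_of_Lnorm.
Qed.
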